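(* Let $Q$ be a fixed IPC formula and let $\phi : K \to L$ be the map defined in the context. Then for every IPC formula $Z \in L$, $\phi(Z) \equiv QQZ$, i.e. $\phi(Z) \vdash_L (Z \supset Q) \supset Q$ and $(Z \supset Q) \supset Q \vdash_L \phi(Z)$.
   Context: $K$ is the set of PC formulas: built from propositional variables and a propositional constant $\mathfrak{f}$ using only the conditional $\supset$. $L \subseteq K$ is the set of IPC formulas: built from propositional variables using only $\supset$. IPC has Modus Ponens as its only rule and axioms all instances (with IPC formulas) of $(\#1)\ A \supset (B \supset A)$; $(\#2)\ [A \supset (B \supset C)] \supset [(A \supset B) \supset (A \supset C)]$; $(\mathbb{P})\ [(A \supset B) \supset A] \supset A$. $\Gamma \vdash_L Y$ means there is a deduction of $Y$ from hypotheses $\Gamma$ in IPC; $X \equiv Y$ means $X \vdash_L Y$ and $Y \vdash_L X$. For an IPC formula $Z$ write $QZ := Z \supset Q$ and $QQZ := (Z \supset Q)\supset Q$. The map $\phi : K \to L$ is defined by induction on the number of conditionals: $\phi(\mathfrak{f}) = Q$; $\phi(p) = QQp = (p \supset Q) \supset Q$ for each propositional variable $p$; and $\phi(X \supset Y) = \phi(X) \supset \phi(Y)$. *)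

Inductive formL : Type :=
| LVar : nat -> formL
| LImp : formL -> formL -> formL.

Inductive formK : Type :=
| KVar : nat -> formK
| KFalse : formK
| KImp : formK -> formK -> formK.

Fixpoint embedL (A : formL) : formK :=
  match A with
  | LVar p => KVar p
  | LImp A B => KImp (embedL A) (embedL B)
  end.

Definition QQ (Q Z : formL) : formL := LImp (LImp Z Q) Q.

Fixpoint phi (Q : formL) (X : formK) : formL :=
  match X with
  | KFalse => Q
  | KVar p => QQ Q (LVar p)
  | KImp X Y => LImp (phi Q X) (phi Q Y)
  end.

Inductive deriv (Gamma : formL -> Prop) : formL -> Prop :=
| d_hyp : forall A, Gamma A -> deriv Gamma A
| d_ax1 : forall A B, deriv Gamma (LImp A (LImp B A))
| d_ax2 : forall A B C,
    deriv Gamma (LImp (LImp A (LImp B C)) (LImp (LImp A B) (LImp A C)))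
| d_axP : forall A B, deriv Gamma (LImp (LImp (LImp A B) A) A)
| d_mp : forall A B, deriv Gamma (LImp A B) -> deriv Gamma A -> deriv Gamma B.

Definition derivFrom (X Y : formL) : Prop := deriv (fun A => A = X) Y.

Definition equivL (X Y : formL) : Prop := derivFrom X Y /\ derivFrom Y X.


(* On A ⊃ B, phi
   commutes with ⊃, so by the induction hypotheses it suffices to know that
   ⊃ is a congruence for ≡ and that QQ distributes over implication:
   QQ(A ⊃ B) ≡ QQA ⊃ QQB.  One direction is intuitionistic; the other needs
   Peirce's law, which lets Q play the role of falsum. *)

Definition extend (Gamma : formL -> Prop) (A : formL) : formL -> Prop :=
  fun X => X = A \/ Gamma X.

Ltac by_hyp := apply d_hyp; unfold extend;
  repeat (first [left; reflexivity | right]); reflexivity.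

Lemma deriv_trans_hyps (Gamma Delta : formL -> Prop) (B : formL) :
  deriv Gamma B -> (forall A, Gamma A -> deriv Delta A) -> deriv Delta B.
Proof.
  intros D HGD; induction D.
  - auto.
  - apply d_ax1.
  - apply d_ax2.
  - apply d_axP.
  - eapply d_mp; eauto.
Qed.

Lemma deriv_imp_refl (Gamma : formL -> Prop) (A : formL) :
  deriv Gamma (LImp A A).
Proof.
  eapply d_mp; [eapply d_mp |].
  - apply (d_ax2 Gamma A (LImp A A) A).
  - apply d_ax1.
  - apply (d_ax1 Gamma A A).
Qed.

Lemma deduction (Gamma : formL -> Prop) (A B : formL) :
  deriv (extend Gamma A) B -> deriv Gamma (LImp A B).
Proof.
  intro D; induction D as [X HX | | | | X Y _ IHXY _ IHX].
  - destruct HX as [-> | HX].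
    + apply deriv_imp_refl.
    + eapply d_mp; [apply d_ax1 | apply d_hyp; exact HX].
  - eapply d_mp; apply d_ax1.
  - eapply d_mp; [apply d_ax1 | apply d_ax2].
  - eapply d_mp; [apply d_ax1 | apply d_axP].
  - eapply d_mp; [eapply d_mp; [apply d_ax2 | exact IHXY] | exact IHX].
Qed.

Lemma peirce_rule (Gamma : formL -> Prop) (Q R : formL) :
  deriv (extend Gamma (LImp Q R)) Q -> deriv Gamma Q.
Proof.
  intro D; eapply d_mp; [apply (d_axP Gamma Q R) | apply deduction; exact D].
Qed.

Lemma derivFrom_imp (Gamma : formL -> Prop) (X Y : formL) :
  derivFrom X Y -> deriv Gamma (LImp X Y).
Proof.
  intro D; apply deduction; apply (deriv_trans_hyps _ _ _ D).
  intros A ->; by_hyp.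
Qed.

Lemma derivFrom_trans (X Y Z : formL) :
  derivFrom X Y -> derivFrom Y Z -> derivFrom X Z.
Proof.
  intros DXY DYZ; eapply d_mp; [apply derivFrom_imp; exact DYZ | exact DXY].
Qed.

Lemma derivFrom_imp_congr (X X' Y Y' : formL) :
  derivFrom X' X -> derivFrom Y Y' -> derivFrom (LImp X Y) (LImp X' Y').
Proof.
  intros DX DY; apply deduction.
  eapply d_mp; [apply derivFrom_imp; exact DY |].
  eapply d_mp; [by_hyp |].
  eapply d_mp; [apply derivFrom_imp; exact DX | by_hyp].
Qed.

Lemma QQ_imp_collect (Q A B : formL) :
  derivFrom (LImp (QQ Q A) (QQ Q B)) (QQ Q (LImp A B)).
Proof.
  unfold derivFrom, QQ; apply deduction.
  (* With Q ⊃ B available, Q proves anything needed and QQA becomes provable. *)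
  apply (peirce_rule _ _ B).
  apply (d_mp _ (LImp B Q)); [apply (d_mp _ (QQ Q A)); [by_hyp |] |].
  - apply deduction; apply (d_mp _ (LImp A B)); [by_hyp |].
    apply deduction; apply (d_mp _ Q); [by_hyp |].
    apply (d_mp _ A); by_hyp.
  - apply deduction; apply (d_mp _ (LImp A B)); [by_hyp |].
    apply deduction; by_hyp.
Qed.

Lemma QQ_imp_distrib (Q A B : formL) :
  derivFrom (QQ Q (LImp A B)) (LImp (QQ Q A) (QQ Q B)).
Proof.
  unfold derivFrom, QQ; apply deduction; apply deduction.
  apply (d_mp _ (LImp (LImp A B) Q)); [by_hyp |].
  apply deduction; apply (d_mp _ (LImp A Q)); [by_hyp |].
  apply deduction; apply (d_mp _ B); [by_hyp |].
  apply (d_mp _ A); by_hyp.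
Qed.

Lemma equivL_refl (X : formL) : equivL X X.
Proof. split; apply d_hyp; reflexivity. Qed.

Lemma equivL_trans (X Y Z : formL) :
  equivL X Y -> equivL Y Z -> equivL X Z.
Proof.
  intros [DXY DYX] [DYZ DZY]; split; eapply derivFrom_trans; eassumption.
Qed.

Lemma equivL_imp (X X' Y Y' : formL) :
  equivL X X' -> equivL Y Y' -> equivL (LImp X Y) (LImp X' Y').
Proof.
  intros [DXX' DX'X] [DYY' DY'Y]; split; apply derivFrom_imp_congr; assumption.
Qed.

Lemma QQ_imp_equivL (Q A B : formL) :
  equivL (LImp (QQ Q A) (QQ Q B)) (QQ Q (LImp A B)).
Proof. split; [apply QQ_imp_collect | apply QQ_imp_distrib]. Qed.

Theorem theorem5 (Q Z : formL) :
  equivL (phi Q (embedL Z)) (QQ Q Z).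
Proof.
  induction Z as [p | A IHA B IHB]; simpl.
  - apply equivL_refl.
  - eapply equivL_trans; [apply equivL_imp; eassumption | apply QQ_imp_equivL].
Qed.
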